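(* Let $q$ be a power of an odd prime, $d\ge 2$, $r\in\mathbb F_q^*$. Define on $\mathbb F_q^{2d}$ the varieties $V_{\mathcal Q_r}=\{(x,x')\in\mathbb F_q^{2d}: \|x\|_Q-r\|x'\|_Q=0\}$ and $V_{\mathcal Q_r^*}=\{(m,m')\in\mathbb F_q^{2d}: \|m\|_{Q^*}-r^{-1}\|m'\|_{Q^*}=0\}$. Then for every $M\in\mathbb F_q^{2d}$: (i) if $d$ is even, $\widehat{V_{\mathcal Q_r}}(M)=\frac{\delta_0(M)}{q}+\frac{V_{\mathcal Q_r^*}(M)}{q^d}-\frac{1}{q^{d+1}}$; (ii) if $d$ is odd, $\widehat{V_{\mathcal Q_r}}(M)=\frac{\delta_0(M)}{q}+\frac{\eta(r)V_{\mathcal Q_r^*}(M)}{q^d}-\frac{\eta(r)}{q^{d+1}}$.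
   Context: $\eta$ is the quadratic character of $\mathbb F_q^*$ ($\eta(t)=1$ if $t$ is a nonzero square, $-1$ otherwise). Fix a symmetric $d\times d$ matrix $A$ over $\mathbb F_q$ with $\det A\ne0$. If $d$ is even: $\|x\|_Q=x_1^2-x_2^2+\dots+x_{d-1}^2-\varepsilon x_d^2$ and $\|m\|_{Q^*}=m_1^2-m_2^2+\dots+m_{d-1}^2-\varepsilon^{-1}m_d^2$, with $\varepsilon\in\mathbb F_q^*$ such that $\eta((-1)^{d/2}\varepsilon)=\eta(\det A)$. If $d$ is odd: $\|x\|_Q=x_1^2-x_2^2+\dots+x_{d-2}^2-x_{d-1}^2+\varepsilon x_d^2$ and $\|m\|_{Q^*}=m_1^2-m_2^2+\dots+m_{d-2}^2-m_{d-1}^2+\varepsilon^{-1}m_d^2$, with $\eta((-1)^{(d-1)/2}\varepsilon)=\eta(\det A)$. $\chi$ is the canonical additive character of $\mathbb F_q$ ($\chi(c)=e^{2\pi i\,\mathrm{Tr}(c)/p}$), the Fourier transform on $\mathbb F_q^{n}$ is $\widehat f(M)=q^{-n}\sum_X\chi(-M\cdot X)f(X)$, sets are identified with their indicator functions, and $\delta_0$ is the indicator of the origin. *)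

From HB Require Import structures.
From mathcomp Require Import all_boot all_order all_algebra.
From mathcomp Require Import finfield algC.
Unset Printing Implicit Defensive.
Import Order.TTheory GRing.Theory Num.Theory.
Local Open Scope ring_scope.

Definition qchar {F : finFieldType} (t : F) : algC :=
  if t == 0 then 0 else if [exists s : F, s ^+ 2 == t] then 1 else -1.

Definition char_p (F : finFieldType) : nat := pdiv #|F|.

Definition trace {F : finFieldType} (c : F) : F :=
  \sum_(i < logn (char_p F) #|F|) c ^+ (char_p F ^ i).

(* e^{2 pi i / p}: p.-root (-1) is the p-th root of -1 of minimal argument,
   i.e. e^{i pi / p}; its square is e^{2 pi i / p}. *)
Definition omega_p (p : nat) : algC := (p.-root (-1)) ^+ 2.

(* Canonical additive character chi(c) = e^{2 pi i Tr(c)/p}, where Tr(c)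
   is identified with the integer k in [0,p) such that Tr(c) = k%:R. *)
Definition addchar {F : finFieldType} (c : F) : algC :=
  match [pick k : 'I_(char_p F) | (k%:R : F) == trace c] with
  | Some k => omega_p (char_p F) ^+ k
  | None => 0
  end.

Definition dotv {F : finFieldType} {n : nat} (u v : 'rV[F]_n) : F :=
  \sum_(i < n) u 0 i * v 0 i.

Definition fourier {F : finFieldType} {n : nat} (f : 'rV[F]_n -> algC)
    (M : 'rV[F]_n) : algC :=
  (#|F|%:R ^- n) * \sum_(X : 'rV[F]_n) addchar (- dotv M X) * f X.

Definition coefQ {F : finFieldType} (d : nat) (eps : F) (i : nat) : F :=
  if (i.+1 < d)%N then (-1) ^+ i else if odd d then eps else - eps.

Definition normQ {F : finFieldType} (d : nat) (eps : F) (x : 'rV[F]_d) : F :=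
  \sum_(i < d) coefQ d eps i * x 0 i ^+ 2.

Definition normQstar {F : finFieldType} (d : nat) (eps : F) (m : 'rV[F]_d) : F :=
  normQ d eps^-1 m.

Definition VQ {F : finFieldType} (d : nat) (eps r : F) (X : 'rV[F]_(d + d)) : algC :=
  (normQ d eps (lsubmx X) - r * normQ d eps (rsubmx X) == 0)%:R.

Definition VQstar {F : finFieldType} (d : nat) (eps r : F) (M : 'rV[F]_(d + d)) : algC :=
  (normQstar d eps (lsubmx M) - r^-1 * normQstar d eps (rsubmx M) == 0)%:R.

Definition delta0 {F : finFieldType} {n : nat} (M : 'rV[F]_n) : algC := (M == 0)%:R.

From HB Require Import structures.
From mathcomp Require Import all_boot all_order all_algebra.
From mathcomp Require Import finfield algC zify ring.
Import Order.TTheory GRing.Theory Num.Theory.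
Local Open Scope ring_scope.

(* Writing the indicator of [Q_r(X) = 0] as [q^-1 sum_s chi (s Q_r(X))], the Fourier
   transform becomes a sum over [s] of products of one-variable sums
   [sum_t chi (s c_i t^2 - m_i t)].  For [s = 0] these give [q^(2d) delta_0(M)]; for
   [s <> 0], completing the square turns each into [chi (- m_i^2 / (4 s c_i))] times the
   quadratic Gauss sum [eta (s c_i) G].  As the number [2d] of variables is even,
   [G^2 = eta (-1) q] and [eta (s)^2 = 1] make the product
   [chi (- Q_r^*(M) / (4 s)) eta (r)^d q^d], and since [s |-> -1/(4 s)] permutes the
   nonzero [s], orthogonality of [chi] sums these to [eta (r)^d q^d (q [Q_r^*(M) = 0] - 1)]. *)

Lemma omega_pX {p : nat} : (0 < p)%N -> omega_p p ^+ p = 1.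
Proof. by move=> p_gt0; rewrite -exprM mulnC exprM rootCK // sqrrN expr1n. Qed.

Lemma omega_p_neq1 {p : nat} : (1 < p)%N -> omega_p p != 1.
Proof.
move=> p_gt1; rewrite /omega_p sqrf_eq1; apply/norP; split; apply/eqP => w_eq.
  have := rootCK (ltnW p_gt1) (-1 : algC); rewrite /= w_eq expr1n => /eqP.
  by rewrite -subr_eq0 opprK (pnatr_eq0 _ 2).
by have := rootC_lt0 (-1 : algC) p_gt1; rewrite w_eq ltrN10.
Qed.

Lemma omega_p_prim {p : nat} : prime p -> p.-primitive_root (omega_p p).
Proof.
move=> p_prime; have p_gt0 := prime_gt0 p_prime.
have [m m_prim] := prim_order_exists p_gt0 (omega_pX p_gt0).
have m_dvd_p : (m %| p)%N by rewrite (prim_order_dvd m_prim) omega_pX.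
have m_neq1 : m != 1%N.
  apply: contra_neq (omega_p_neq1 (prime_gt1 p_prime)) => m1.
  by rewrite -(prim_expr_order m_prim) m1 expr1.
move/primeP: p_prime => [_ /(_ m m_dvd_p)].
by rewrite (negPf m_neq1) /= => /eqP m_eq_p _; subst m.
Qed.

Section AdditiveCharacter.
Variable F : finFieldType.
Local Notation p := (char_p F).
Local Notation n := (logn (char_p F) #|F|).
Local Notation q := (#|F|%:R : algC).
Local Notation chi := (@addchar F).

Lemma char_pP : [/\ prime p, p \in [pchar F], #|F| = (p ^ n)%N & (0 < n)%N].
Proof.
have [p0 p0_prime p0_char] := finPcharP F.
have cardF : #|F| = (p0 ^ logn p0 #|F|)%N := card_pprimeChar p0_char.
have n_gt0 : (0 < logn p0 #|F|)%N.
  by rewrite lt0n; apply: contraTneq (finNzRing_gt1 F) => n0; rewrite cardF n0.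
suff -> : p = p0 by [].
by rewrite /char_p cardF; case: (logn p0 #|F|) n_gt0 => // k _; rewrite pdiv_pfactor.
Qed.

Lemma char_p_prime : prime p. Proof. by case: char_pP. Qed.
Lemma char_p_char : p \in [pchar F]. Proof. by case: char_pP. Qed.
Lemma char_p_gt0 : (0 < p)%N. Proof. exact: prime_gt0 char_p_prime. Qed.

Lemma natr_inj_char (k j : nat) : (k < p)%N -> (j < p)%N -> k%:R = j%:R :> F -> k = j.
Proof.
wlog kj : k j / (k <= j)%N => [hwlog|] hk hj kj_eq.
  by case: (leqP k j) => [|/ltnW] ?; [|symmetry]; apply: hwlog.
have : (p %| j - k)%N by rewrite (dvdn_pcharf char_p_char) natrB // kj_eq subrr.
by rewrite /dvdn modn_small => [/eqP|]; lia.
Qed.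

Lemma frobenius_fixed_nat (x : F) : x ^+ p = x -> exists k : 'I_p, k%:R = x.
Proof.
(* Otherwise [X^p - X] would have the [p + 1] distinct roots [x] and [k%:R], [k < p]. *)
move=> xp; have [k /eqP <- | notnat] := pickP (fun k : 'I_p => k%:R == x).
  by exists k.
have p_gt1 := prime_gt1 char_p_prime.
pose P : {poly F} := 'X^p - 'X.
have sizeP : size P = p.+1.
  by rewrite size_polyDl ?size_polyXn // size_polyN size_polyX ltnS.
have P_neq0 : P != 0 by rewrite -size_poly_eq0 sizeP.
pose rs := x :: [seq (val k)%:R | k <- enum 'I_p] : seq F.
have rootsP : all (root P) rs.
  apply/allP => y; rewrite inE => /orP[/eqP -> | /mapP[k _ ->]].
    by rewrite /root !hornerE xp subrr.
  by rewrite /root !hornerE -(pFrobenius_autE char_p_char) rmorph_nat subrr.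
have uniq_rs : uniq rs.
  rewrite /= map_inj_uniq ?enum_uniq ?andbT.
    by apply/mapP => -[k _ kx]; move: (notnat k); rewrite kx eqxx.
  by move=> [a ha] [b hb] /= /natr_inj_char ab; apply: val_inj; apply: ab.
have := max_poly_roots P_neq0 rootsP uniq_rs.
by rewrite sizeP /= size_map size_enum_ord ltnn.
Qed.

Lemma expr_char_pD (x y : F) i : (x + y) ^+ (p ^ i) = x ^+ (p ^ i) + y ^+ (p ^ i).
Proof.
elim: i => [|i IH]; first by rewrite !expn0 !expr1.
by rewrite !expnSr !exprM IH -!(pFrobenius_autE char_p_char) rmorphD.
Qed.

Lemma traceD (a b : F) : trace (a + b) = trace a + trace b.
Proof. by rewrite /trace -big_split; apply: eq_bigr => i _; rewrite expr_char_pD. Qed.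

Lemma trace0 : trace (0 : F) = 0.
Proof. by apply: (@addrI _ (trace 0)); rewrite -traceD !addr0. Qed.

Lemma trace_char_pX (c : F) : trace c ^+ p = trace c.
Proof.
(* Frobenius permutes the summands cyclically, as [c ^+ (p ^ n) = c]. *)
rewrite /trace -(pFrobenius_autE char_p_char) rmorph_sum /=.
under eq_bigr => i _ do rewrite pFrobenius_autE -exprM -expnSr.
have [_ _ cardF] := char_pP; case: n cardF => // m cardF _.
rewrite big_ord_recr big_ord_recl /= expn0 expr1 -cardF expf_card addrC.
by congr (_ + _).
Qed.

Lemma trace_neq0 : exists c : F, trace c != 0.
Proof.
(* The trace is a nonzero polynomial of degree [p ^ (n - 1) < #|F|]. *)
have [c | trace_eq0] := pickP (fun c : F => trace c != 0); first by exists c.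
exfalso.
have [p_prime _ cardF n_gt0] := char_pP; have p_gt1 := prime_gt1 p_prime.
pose P : {poly F} := \sum_(i < n) 'X^(p ^ i).
have P_neq0 : P != 0.
  apply: contra_neq (oner_neq0 F) => P_eq0.
  have := congr1 (fun Q : {poly F} => Q`_1) P_eq0.
  rewrite coef0 coef_sum (bigD1 (Ordinal n_gt0)) //= expn0 coefXn eqxx big1 ?addr0 //.
  move=> i; rewrite -val_eqE /= => i_neq0.
  have : (1 < p ^ i)%N by rewrite -[X in (X < _)%N](expn0 p) ltn_exp2l // lt0n.
  by rewrite coefXn => /ltn_eqF ->.
have sizeP : (size P <= (p ^ n.-1).+1)%N.
  apply: (leq_trans (size_sum _ _ _)); apply/bigmax_leqP => i _.
  by rewrite size_polyXn ltnS leq_pexp2l // ?prime_gt0 // -ltnS prednK.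
have rootsP : all (root P) (enum F).
  apply/allP => y _; rewrite /root /P horner_sum.
  under eq_bigr do rewrite hornerXn.
  exact: negbFE (trace_eq0 y).
have := leq_trans (max_poly_roots P_neq0 rootsP (enum_uniq _)) sizeP.
rewrite -cardT; move: cardF n_gt0; set N := logn _ _ => cardF n_gt0.
by rewrite {1}cardF ltnS leqNgt ltn_exp2l // prednK // leqnn.
Qed.

Lemma addcharE (c : F) :
  exists k : 'I_p, k%:R = trace c /\ chi c = omega_p p ^+ k.
Proof.
rewrite /addchar; case: pickP => [k /eqP hk | none]; first by exists k.
have [k kc] := frobenius_fixed_nat _ (trace_char_pX c).
by move: (none k); rewrite kc eqxx.
Qed.

Lemma addcharD (a b : F) : chi (a + b) = chi a * chi b.
Proof.
have [ka [tra ->]] := addcharE a; have [kb [trb ->]] := addcharE b.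
have [k [tr ->]] := addcharE (a + b).
rewrite -exprD -[RHS](expr_mod _ (omega_pX char_p_gt0)); congr (_ ^+ _).
apply: natr_inj_char => //; first by rewrite ltn_mod char_p_gt0.
by rewrite (GRing.natr_mod_pchar char_p_char) tr traceD -tra -trb natrD.
Qed.

Lemma addchar0 : chi 0 = 1.
Proof.
have [k [tr ->]] := addcharE 0.
suff -> : (k : nat) = 0%N by [].
by apply: natr_inj_char => //; rewrite ?char_p_gt0 // tr trace0.
Qed.

Lemma addchar_sum (I : finType) (f : I -> F) : chi (\sum_i f i) = \prod_i chi (f i).
Proof. exact: (big_morph chi addcharD addchar0). Qed.

Lemma addchar_nontrivial : exists c : F, chi c != 1.
Proof.
have [c trc] := trace_neq0; exists c; have [k [tr ->]] := addcharE c.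
rewrite -(prim_order_dvd (omega_p_prim char_p_prime)) /dvdn modn_small //.
by apply: contra trc => /eqP k0; rewrite -tr k0.
Qed.

Lemma sum_addchar_mul (a : F) : \sum_t chi (a * t) = if a == 0 then q else 0.
Proof.
have [-> | a_neq0] := eqVneq a 0.
  by under eq_bigr do rewrite mul0r addchar0; rewrite sumr_const.
have -> : \sum_t chi (a * t) = \sum_t chi t by rewrite [RHS](reindex_inj (mulfI a_neq0)).
have [c chi_c] := addchar_nontrivial.
have shift : \sum_t chi t = chi c * \sum_t chi t.
  by rewrite mulr_sumr [LHS](reindex_inj (addrI c)); apply: eq_bigr => t _; rewrite addcharD.
have : (1 - chi c) * \sum_t chi t = 0 by rewrite mulrBl mul1r -shift subrr.
by move/eqP; rewrite mulf_eq0 subr_eq0 eq_sym (negPf chi_c) => /eqP.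
Qed.

Lemma q_neq0 : q != 0.
Proof. by rewrite pnatr_eq0 -lt0n (leq_trans _ (finNzRing_gt1 F)). Qed.

Lemma indicator_addchar (x : F) : (x == 0)%:R = q^-1 * \sum_s chi (s * x).
Proof.
under eq_bigr do rewrite mulrC.
by rewrite sum_addchar_mul; case: eqP; rewrite ?mulVf ?q_neq0 ?mulr0.
Qed.

End AdditiveCharacter.

Section QuadraticCharacter.
Context {F : finFieldType}.
Hypothesis oddF : odd #|F|.
Local Notation q := (#|F|%:R : algC).
Local Notation chi := (@addchar F).
Local Notation eta := (@qchar F).
Local Notation is_square u := [exists s : F, s ^+ 2 == u].

Lemma char_p_odd : odd (char_p F).
Proof.
have [_ _ cardF n_gt0] := char_pP F.
by move: oddF; rewrite {1}cardF oddX eqn0Ngt n_gt0.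
Qed.

Lemma two_neq0 : (2%:R : F) != 0.
Proof.
have [p_prime p_char _ _] := char_pP F.
apply: contraL char_p_odd; rewrite -(dvdn_pcharf p_char) => /(@dvdn_leq _ 2 isT).
by case: (char_p F) (prime_gt1 p_prime) => [|[|[|k]]].
Qed.

Lemma four_neq0 : (4%:R : F) != 0.
Proof. by rewrite -[4%N]/(2 * 2)%N natrM mulf_neq0 ?two_neq0. Qed.

Lemma card_sqrt (u : F) : #|[pred t : F | t ^+ 2 == u]|%:R = 1 + eta u.
Proof.
rewrite /qchar; have [-> | u_neq0] := eqVneq u 0.
  by rewrite addr0 (eq_card (B := pred1 0)) ?card1 // => t; rewrite !inE sqrf_eq0.
case: (boolP (is_square u)) => [/existsP[s /eqP su] | not_square].
  rewrite -{}su in u_neq0 *.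
  have s_neq0 : s != 0 by apply: contraNneq u_neq0 => ->; rewrite expr0n.
  have s_neqN : s != - s.
    by rewrite -subr_eq0 opprK -mulr2n -mulr_natl mulf_neq0 ?two_neq0.
  by rewrite (eq_card (B := pred2 s (- s))) ?card2 ?s_neqN // => t; rewrite !inE eqf_sqr.
rewrite subrr (eq_card0 (A := [pred t : F | t ^+ 2 == u])) // => t.
by apply: contraNF not_square => t2u; apply/existsP; exists t.
Qed.

Lemma sum_sqr (f : F -> algC) : \sum_t f (t ^+ 2) = \sum_u (1 + eta u) * f u.
Proof.
rewrite (partition_big (fun t : F => t ^+ 2) xpredT) //=; apply: eq_bigr => u _.
rewrite (eq_bigr (fun _ => f u)) => [|t /eqP -> //].
by rewrite sumr_const -mulr_natl -card_sqrt.
Qed.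

Lemma sum_qchar : \sum_u eta u = 0.
Proof.
have sum1 : \sum_(t : F) (1 : algC) = \sum_(u : F) 1 + \sum_u eta u.
  rewrite -big_split; apply: (etrans (sum_sqr (fun=> 1))).
  by apply: eq_bigr => u _; rewrite mulr1.
by apply: (@addrI _ (\sum_(t : F) 1)); rewrite addr0 -sum1.
Qed.

Lemma qchar0 : eta 0 = 0. Proof. by rewrite /qchar eqxx. Qed.

Lemma qchar_neq0 (x : F) : x != 0 -> eta x = if is_square x then 1 else -1.
Proof. by rewrite /qchar => /negPf ->. Qed.

Lemma is_squareMl (a u : F) : is_square a -> a != 0 -> is_square (a * u) = is_square u.
Proof.
case/existsP => s /eqP <- a_neq0.
have s_neq0 : s != 0 by apply: contraNneq a_neq0 => ->; rewrite expr0n.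
apply/existsP/existsP => [[w /eqP w2] | [v /eqP <-]]; last by exists (s * v); rewrite exprMn.
by exists (w / s); rewrite expr_div_n w2 mulrC mulKf // expf_neq0.
Qed.

Lemma qcharM (a u : F) : eta (a * u) = eta a * eta u.
Proof.
have [-> | a_neq0] := eqVneq a 0; first by rewrite mul0r qchar0 mul0r.
have [-> | u_neq0] := eqVneq u 0; first by rewrite mulr0 qchar0 mulr0.
rewrite !qchar_neq0 ?mulf_neq0 //.
case: (boolP (is_square a)) => a_sq; first by rewrite is_squareMl // mul1r.
case: (boolP (is_square u)) => u_sq; first by rewrite mulrC is_squareMl // (negPf a_sq) mulr1.
rewrite mulrNN mulr1.
(* For a non-square a, v |-> - (eta (a * v) + eta v) is nonnegative with zero sum. *)
have sum_eq0 : \sum_v - (eta (a * v) + eta v) = 0.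
  rewrite sumrN big_split /= sum_qchar addr0.
  have -> : \sum_v eta (a * v) = \sum_v eta v by rewrite [RHS](reindex_inj (mulfI a_neq0)).
  by rewrite sum_qchar oppr0.
have ge0 v : true -> 0 <= - (eta (a * v) + eta v).
  move=> _; have [-> | v_neq0] := eqVneq v 0; first by rewrite mulr0 qchar0 addr0 oppr0.
  rewrite !qchar_neq0 ?mulf_neq0 //; case: (boolP (is_square v)) => v_sq.
    by rewrite mulrC is_squareMl // (negPf a_sq) addNr oppr0.
  by case: (is_square (a * v)); rewrite ?subrr ?oppr0 // opprD !opprK addr_ge0 ?ler01.
have := psumr_eq0P ge0 sum_eq0 (i := u) isT; rewrite !qchar_neq0 ?mulf_neq0 // (negPf u_sq).
case: (is_square (a * u)) => // /eqP.
by rewrite -opprD !oppr_eq0 paddr_eq0 ?ler01 // oner_eq0.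
Qed.

Lemma qchar1 : eta 1 = 1.
Proof.
by rewrite qchar_neq0 ?oner_neq0 //; case: existsP => // -[]; exists 1; rewrite expr1n.
Qed.

Lemma qchar_sqr (a : F) : a != 0 -> eta a ^+ 2 = 1.
Proof. by move=> a_neq0; rewrite qchar_neq0 //; case: ifP; rewrite ?sqrrN expr1n. Qed.

Lemma qchar_prod (I : finType) (c : I -> F) : eta (\prod_i c i) = \prod_i eta (c i).
Proof. exact: (big_morph eta qcharM qchar1). Qed.

Lemma qcharX (a : F) k : eta (a ^+ k) = eta a ^+ k.
Proof. by elim: k => [|k IH]; rewrite ?expr0 ?qchar1 // !exprS qcharM IH. Qed.

Definition gauss_sum : algC := \sum_v eta v * chi v.

Lemma sum_addchar_sqr (a : F) : a != 0 -> \sum_t chi (a * t ^+ 2) = eta a * gauss_sum.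
Proof.
move=> a_neq0; rewrite (sum_sqr (fun u => chi (a * u))).
under eq_bigr do rewrite mulrDl mul1r.
rewrite big_split /= sum_addchar_mul (negPf a_neq0) add0r /gauss_sum mulr_sumr.
rewrite [RHS](reindex_inj (mulfI a_neq0)) /=; apply: eq_bigr => u _.
by rewrite qcharM !mulrA -expr2 qchar_sqr // mul1r.
Qed.

Lemma gauss_sum_sqr : gauss_sum ^+ 2 = eta (-1) * q.
Proof.
have N1_neq0 : (-1 : F) != 0 by rewrite oppr_eq0 oner_neq0.
have expand (t v : F) : 1 * t ^+ 2 + -1 * (t + v) ^+ 2 = - v ^+ 2 + - (2%:R * v) * t.
  by ring.
have prodE : (\sum_t chi (1 * t ^+ 2)) * (\sum_u chi (-1 * u ^+ 2)) = q.
  (* Substituting [u = t + v], only the [v = 0] part of the double sum survives. *)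
  rewrite mulr_suml.
  under eq_bigr => t _ do rewrite mulr_sumr (reindex_inj (addrI t)) /=.
  under eq_bigr => t _ do under eq_bigr => v _ do rewrite -addcharD expand addcharD.
  rewrite exchange_big /=; under eq_bigr do rewrite -mulr_sumr sum_addchar_mul.
  rewrite (bigD1 0) //= big1 => [|v v_neq0]; last first.
    by rewrite oppr_eq0 mulf_eq0 (negPf two_neq0) (negPf v_neq0) mulr0.
  by rewrite mulr0 oppr0 eqxx expr0n oppr0 addchar0 mul1r addr0.
rewrite !sum_addchar_sqr ?oner_neq0 // qchar1 mul1r in prodE.
by rewrite -prodE -[LHS]mul1r -{1}(qchar_sqr _ N1_neq0); ring.
Qed.

Lemma sum_addchar_quadratic (a m : F) : a != 0 ->
  \sum_t chi (a * t ^+ 2 + m * t) = chi (- (m ^+ 2 / (4%:R * a))) * (eta a * gauss_sum).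
Proof.
move=> a_neq0; rewrite (reindex_inj (addrI (- m / (2%:R * a)))) /=.
have square t : a * (- m / (2%:R * a) + t) ^+ 2 + m * (- m / (2%:R * a) + t)
    = - (m ^+ 2 / (4%:R * a)) + a * t ^+ 2.
  by field; rewrite a_neq0 two_neq0 four_neq0.
under eq_bigr do rewrite square addcharD.
by rewrite -mulr_sumr sum_addchar_sqr.
Qed.

Lemma sum_addchar_inv (K : F) :
  \sum_(s | s != 0) chi (- ((4%:R * s)^-1 * K)) = (K == 0)%:R * q - 1.
Proof.
pose h s : F := - (4%:R * s)^-1.
have hK : involutive h.
  by move=> s; rewrite /h mulrN invrN opprK invfM invrK mulrA mulVf ?mul1r ?four_neq0.
have sum_h : \sum_s chi (h s * K) = \sum_u chi (u * K).
  by rewrite [RHS](reindex_inj (inv_inj hK)).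
rewrite (bigD1 0) //= /h mulr0 invr0 oppr0 mul0r addchar0 in sum_h.
under eq_bigr do rewrite -mulNr.
rewrite -(addrK 1 (\sum_(s | _) _)) [_ + 1]addrC sum_h.
under eq_bigr do rewrite mulrC; rewrite sum_addchar_mul.
by case: eqP; rewrite ?mul1r ?mul0r.
Qed.

End QuadraticCharacter.

Definition diag_form {F : finFieldType} {n : nat} (c X : 'rV[F]_n) : F :=
  \sum_i c 0 i * X 0 i ^+ 2.

Lemma diag_formZ {F : finFieldType} {n : nat} (k : F) (c X : 'rV[F]_n) :
  diag_form (k *: c) X = k * diag_form c X.
Proof. by rewrite /diag_form mulr_sumr; apply: eq_bigr => i _; rewrite mxE mulrA. Qed.

Lemma diag_form_row_mx {F : finFieldType} {m1 m2 : nat} (a : 'rV[F]_m1) (b : 'rV[F]_m2) X :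
  diag_form (row_mx a b) X = diag_form a (lsubmx X) + diag_form b (rsubmx X).
Proof.
rewrite /diag_form big_split_ord /=.
by congr (_ + _); apply: eq_bigr => i _; rewrite ?row_mxEl ?row_mxEr !mxE.
Qed.

Lemma map_mx_invZ {F : finFieldType} {n : nat} (k : F) (c : 'rV[F]_n) :
  map_mx GRing.inv (k *: c) = k^-1 *: map_mx GRing.inv c.
Proof. by apply/rowP => i; rewrite !mxE invfM. Qed.

Lemma eq_fourier {F : finFieldType} {n : nat} {f g : 'rV[F]_n -> algC} :
  f =1 g -> fourier f =1 fourier g.
Proof. by move=> fg M; rewrite /fourier; under eq_bigr do rewrite fg. Qed.

Lemma sum_rV_prod (T : finType) (R : comNzRingType) (n : nat) (f : 'I_n -> T -> R) :
  \sum_(X : 'rV[T]_n) \prod_i f i (X 0 i) = \prod_i \sum_t f i t.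
Proof.
rewrite bigA_distr_bigA (reindex (fun g : {ffun 'I_n -> T} => \row_i g i)) /=.
  by apply: eq_bigr => g _; apply: eq_bigr => i _; rewrite mxE.
exists (fun X : 'rV[T]_n => [ffun i => X 0 i]) => [g _ | X _].
  by apply/ffunP => i; rewrite ffunE mxE.
by apply/rowP => i; rewrite mxE ffunE.
Qed.

Section DiagonalForm.
Context {F : finFieldType}.
Hypothesis oddF : odd #|F|.
Local Notation q := (#|F|%:R : algC).
Local Notation chi := (@addchar F).
Local Notation eta := (@qchar F).

Variables (n : nat) (c M : 'rV[F]_n).

Lemma fourier_diag_formE :
  fourier (fun X => (diag_form c X == 0)%:R) M =
  (q ^+ n.+1)^-1 * \sum_s \prod_i \sum_t chi (s * c 0 i * t ^+ 2 + - M 0 i * t).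
Proof.
rewrite /fourier; under eq_bigr do rewrite indicator_addchar mulrCA mulr_sumr.
rewrite -mulr_sumr exchange_big /= mulrA -invfM -exprSr; congr (_ * _).
apply: eq_bigr => s _; rewrite -sum_rV_prod; apply: eq_bigr => X _.
rewrite -addcharD -addchar_sum /dotv /diag_form -sumrN mulr_sumr addrC -big_split /=.
by congr chi; apply: eq_bigr => i _; rewrite mulrA mulNr.
Qed.

Lemma prod_sum_addchar_lin : \prod_i \sum_t chi (- M 0 i * t) = delta0 M * q ^+ n.
Proof.
under eq_bigr do rewrite sum_addchar_mul oppr_eq0.
rewrite /delta0; case: (pickP (fun i => M 0 i != 0)) => [i Mi_neq0 | M_eq0].
  have -> : (M == 0) = false by apply: contraNF Mi_neq0 => /eqP ->; rewrite mxE.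
  by rewrite (bigD1 i) //= (negPf Mi_neq0) !mul0r.
have -> : M = 0 by apply/rowP => i; rewrite mxE; apply/eqP/negbFE/M_eq0.
rewrite eqxx mul1r (eq_bigr (fun=> q)) ?prodr_const ?card_ord // => i _.
by rewrite mxE eqxx.
Qed.

Hypotheses (c_neq0 : forall i, c 0 i != 0) (n_even : ~~ odd n).

Lemma prod_sum_addchar_quadratic (s : F) : s != 0 ->
  \prod_i \sum_t chi (s * c 0 i * t ^+ 2 + - M 0 i * t) =
  chi (- ((4%:R * s)^-1 * diag_form (map_mx GRing.inv c) M))
    * (eta ((-1) ^+ n./2 * \prod_i c 0 i) * q ^+ n./2).
Proof.
move=> s_neq0; under eq_bigr do rewrite sum_addchar_quadratic ?mulf_neq0 //.
rewrite big_split /= -addchar_sum big_split /= prodr_const card_ord; congr (_ * _).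
  congr chi; rewrite /diag_form mulr_sumr -sumrN; apply: eq_bigr => i _; rewrite mxE sqrrN.
  by field; rewrite s_neq0 c_neq0 (four_neq0 oddF).
have expr_even (x : algC) : x ^+ n = (x ^+ 2) ^+ n./2.
  by rewrite -exprM mul2n -{1}(odd_double_half n) (negPf n_even).
under eq_bigr do rewrite (qcharM oddF).
rewrite big_split /= prodr_const card_ord (qcharM oddF) (qcharX oddF) (qchar_prod oddF).
rewrite !expr_even qchar_sqr // expr1n mul1r (gauss_sum_sqr oddF) exprMn.
by ring.
Qed.

Lemma fourier_diag_form :
  fourier (fun X => (diag_form c X == 0)%:R) M =
  delta0 M / q + eta ((-1) ^+ n./2 * \prod_i c 0 i)
    * ((diag_form (map_mx GRing.inv c) M == 0)%:R / q ^+ n./2 - 1 / q ^+ (n./2).+1).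
Proof.
rewrite fourier_diag_formE (bigD1 0) //=.
under eq_bigr do under eq_bigr do rewrite !mul0r add0r.
rewrite prod_sum_addchar_lin.
under eq_bigr => s s_neq0 do rewrite prod_sum_addchar_quadratic //.
rewrite -mulr_suml (sum_addchar_inv oddF).
have qn : q ^+ n = q ^+ n./2 * q ^+ n./2.
  by rewrite -exprD addnn -{1}(odd_double_half n) (negPf n_even).
rewrite !exprSr qn; have qk_neq0 : q ^+ n./2 != 0 by rewrite expf_neq0 ?q_neq0.
by field; rewrite qk_neq0 q_neq0.
Qed.

End DiagonalForm.

Section QuadricPair.
Context {F : finFieldType}.
Hypothesis oddF : odd #|F|.
Variables (d : nat) (eps r : F).
Hypotheses (eps_neq0 : eps != 0) (r_neq0 : r != 0).
Local Notation eta := (@qchar F).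

Definition coefQ_row (e : F) : 'rV[F]_d := \row_i coefQ d e i.

Definition coefQr : 'rV[F]_(d + d) := row_mx (coefQ_row eps) (- r *: coefQ_row eps).

Lemma coefQ_neq0 i : coefQ d eps i != 0.
Proof.
rewrite /coefQ; case: ifP => _; first by rewrite expf_neq0 // oppr_eq0 oner_neq0.
by case: odd; rewrite ?oppr_eq0.
Qed.

Lemma coefQ_inv i : coefQ d eps^-1 i = (coefQ d eps i)^-1.
Proof.
rewrite /coefQ; case: ifP => _; first by rewrite -exprVn invrN1.
by case: odd; rewrite ?invrN.
Qed.

Lemma normQE (e : F) (x : 'rV[F]_d) : normQ d e x = diag_form (coefQ_row e) x.
Proof. by apply: eq_bigr => i _; rewrite mxE. Qed.

Lemma coefQr_neq0 i : coefQr 0 i != 0.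
Proof.
rewrite /coefQr -(splitK i); case: (split i) => j /=.
  by rewrite row_mxEl mxE coefQ_neq0.
by rewrite row_mxEr !mxE mulf_neq0 ?oppr_eq0 ?coefQ_neq0.
Qed.

Lemma VQE : VQ d eps r =1 fun X => (diag_form coefQr X == 0)%:R.
Proof.
by move=> X; rewrite /VQ /coefQr diag_form_row_mx diag_formZ !normQE mulNr.
Qed.

Lemma VQstarE (M : 'rV[F]_(d + d)) :
  VQstar d eps r M = (diag_form (map_mx GRing.inv coefQr) M == 0)%:R.
Proof.
have inv_row : map_mx GRing.inv (coefQ_row eps) = coefQ_row eps^-1.
  by apply/rowP => i; rewrite !mxE coefQ_inv.
rewrite /VQstar /normQstar /coefQr map_row_mx map_mx_invZ inv_row.
by rewrite diag_form_row_mx diag_formZ !normQE invrN mulNr.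
Qed.

Lemma qchar_disc_coefQr : eta ((-1) ^+ d * \prod_i coefQr 0 i) = eta r ^+ d.
Proof.
have prodE : \prod_i coefQr 0 i = (- r) ^+ d * (\prod_(i < d) coefQ d eps i) ^+ 2.
  rewrite /coefQr big_split_ord /=; under eq_bigr do rewrite row_mxEl mxE.
  under [X in _ * X = _]eq_bigr do rewrite row_mxEr !mxE.
  by rewrite big_split /= prodr_const card_ord; ring.
have prod_neq0 : \prod_(i < d) coefQ d eps i != 0 by apply/prodf_neq0 => i _; apply: coefQ_neq0.
rewrite prodE !(qcharM oddF) !(qcharX oddF) -expr2 qchar_sqr // mulr1 -exprMn.
by rewrite -(qcharM oddF) mulN1r opprK.
Qed.

End QuadricPair.

Theorem proposition5p2 (F : finFieldType) (Hodd : odd #|F|) (d : nat) (hd : (2 <= d)%N)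
    (A : 'M[F]_d) (hA : A^T = A) (hdet : \det A != 0)
    (eps : F) (heps0 : eps != 0)
    (heps : qchar ((-1) ^+ (d./2) * eps) = qchar (\det A))
    (r : F) (hr : r != 0) (M : 'rV[F]_(d + d)) :
  (~~ odd d ->
     fourier (VQ d eps r) M =
       delta0 M / #|F|%:R + VQstar d eps r M / #|F|%:R ^+ d - 1 / #|F|%:R ^+ d.+1) /\
  (odd d ->
     fourier (VQ d eps r) M =
       delta0 M / #|F|%:R + qchar r * VQstar d eps r M / #|F|%:R ^+ d
       - qchar r / #|F|%:R ^+ d.+1).
Proof.
(* The identity holds for every [d] and every [eps != 0]; [hd], [A] and [heps] are unused. *)
have half_dd : (d + d)./2 = d by rewrite addnn doubleK.
have dd_even : ~~ odd (d + d) by rewrite addnn odd_double.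
have fourierE : fourier (VQ d eps r) M = delta0 M / #|F|%:R
    + qchar r ^+ d * (VQstar d eps r M / #|F|%:R ^+ d - 1 / #|F|%:R ^+ d.+1).
  have coef_neq0 := coefQr_neq0 d eps r heps0 hr.
  rewrite (eq_fourier (VQE d eps r)) (fourier_diag_form Hodd _ _ _ coef_neq0 dd_even).
  by rewrite -VQstarE half_dd qchar_disc_coefQr.
have qchar_rX : qchar r ^+ d = if odd d then qchar r else 1.
  rewrite -{1}(odd_double_half d) exprD -muln2 mulnC exprM qchar_sqr // expr1n mulr1.
  by case: odd.
rewrite fourierE qchar_rX mulrBr addrA; split=> [/negPf | ] ->; first by rewrite !mul1r.
by rewrite !mulrA mulr1.
Qed.
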